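(* Let $P \subseteq \mathbb{R}^7$ be an associative $3$-plane. Then $\Theta(P) \cap \Lambda^2_7 = P\lrcorner\varphi := \{u\lrcorner\varphi : u \in P\}$.
   Context: Equip $\mathbb{R}^7$ with its standard inner product, orientation and basis. Let $\varphi = e_{123} - e_{167} - e_{527} - e_{563} - e_{415} - e_{426} - e_{437}$ ($e_{ijk} = e_i\wedge e_j\wedge e_k$), $\psi = \star\varphi = e_{4567} - e_{4523} - e_{4163} - e_{4127} - e_{2637} - e_{1537} - e_{1526}$, and define $\times$ by $\langle u \times v, w \rangle = \varphi(u,v,w)$. A $3$-dimensional subspace is associative if closed under $\times$. For $u,v$: $u\wedge v$ is the 2-form $(a,b)\mapsto \langle u,a\rangle\langle v,b\rangle - \langle u,b\rangle\langle v,a\rangle$; $u\lrcorner\varphi$ is the 2-form $(a,b)\mapsto \varphi(u,a,b)$; $\Psi_{uv}$ is the 2-form $(a,b)\mapsto\psi(u,v,a,b)$. $\Lambda^2_7 = \{u\lrcorner\varphi : u\in\mathbb{R}^7\}$. $\Theta(P) = \Lambda^2(P)\oplus\Psi(P)$ with $\Lambda^2(P) = \mathrm{Span}\{u\wedge v: u,v\in P\}$, $\Psi(P) = \mathrm{Span}\{\Psi_{uv} : u,v\in P\}$. *)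

(* R : realType (mathcomp-analysis reals); vectors of R^7 are
   row vectors 'rV[R]_7, subspaces are row spaces of matrices (mxalgebra),
   2-forms are identified with their (Gram) matrices W : 'M[R]_7, i.e.
   the 2-form (a,b) |-> \sum_(i,j) a_i W_ij b_j, W_ij = form(e_i, e_j). *)
From HB Require Import structures.
From mathcomp Require Import all_boot all_order all_algebra.
From mathcomp Require Import reals.
Set Implicit Arguments. Unset Strict Implicit. Unset Printing Implicit Defensive.
Import Order.TTheory GRing.Theory Num.Theory.
Local Open Scope ring_scope.

Section G2.
Variable R : realType.

(* coordinate with the paper's 1-based indexing: x_i = <x, e_i>, 1 <= i <= 7 *)
Definition coord (x : 'rV[R]_7) (i : nat) : R := x 0 (inord i.-1).

(* standard basis vector e_i, 0-based index *)
Definition bvec (i : 'I_7) : 'rV[R]_7 := delta_mx 0 i.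

Definition e3 (i j k : nat) (u v w : 'rV[R]_7) : R :=
  let xs := [:: u; v; w] in let id := [:: i; j; k] in
  \det (\matrix_(r < 3, c < 3) coord (nth 0 xs r) (nth 0%N id c)).

Definition e4 (i j k l : nat) (u v w x : 'rV[R]_7) : R :=
  let xs := [:: u; v; w; x] in let id := [:: i; j; k; l] in
  \det (\matrix_(r < 4, c < 4) coord (nth 0 xs r) (nth 0%N id c)).

Definition phi (u v w : 'rV[R]_7) : R :=
  e3 1 2 3 u v w - e3 1 6 7 u v w - e3 5 2 7 u v w - e3 5 6 3 u v w
  - e3 4 1 5 u v w - e3 4 2 6 u v w - e3 4 3 7 u v w.

Definition psi (u v w x : 'rV[R]_7) : R :=
  e4 4 5 6 7 u v w x - e4 4 5 2 3 u v w x - e4 4 1 6 3 u v w x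
  - e4 4 1 2 7 u v w x - e4 2 6 3 7 u v w x - e4 1 5 3 7 u v w x
  - e4 1 5 2 6 u v w x.

(* cross product: <u x v, w> = phi(u,v,w) *)
Definition cross (u v : 'rV[R]_7) : 'rV[R]_7 := \row_k phi u v (bvec k).

Definition assoc_plane (P : 'M[R]_7) : Prop :=
  \rank P = 3%N /\
  forall u v : 'rV[R]_7, (u <= P)%MS -> (v <= P)%MS -> (cross u v <= P)%MS.

Definition wedge2 (u v : 'rV[R]_7) : 'M[R]_7 :=
  \matrix_(i, j) (u 0 i * v 0 j - u 0 j * v 0 i).
Definition contr (u : 'rV[R]_7) : 'M[R]_7 :=
  \matrix_(i, j) phi u (bvec i) (bvec j).
Definition PsiF (u v : 'rV[R]_7) : 'M[R]_7 :=
  \matrix_(i, j) psi u v (bvec i) (bvec j).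

Definition in_span (S : 'M[R]_7 -> Prop) (W : 'M[R]_7) : Prop :=
  exists (n : nat) (c : 'I_n -> R) (X : 'I_n -> 'M[R]_7),
    (forall i, S (X i)) /\ W = \sum_(i < n) c i *: X i.

Definition Lambda2P (P : 'M[R]_7) : 'M[R]_7 -> Prop :=
  in_span (fun X => exists u v, [/\ (u <= P)%MS, (v <= P)%MS & X = wedge2 u v]).
Definition PsiP (P : 'M[R]_7) : 'M[R]_7 -> Prop :=
  in_span (fun X => exists u v, [/\ (u <= P)%MS, (v <= P)%MS & X = PsiF u v]).

Definition Theta (P : 'M[R]_7) (W : 'M[R]_7) : Prop :=
  exists A B, [/\ Lambda2P P A, PsiP P B & W = A + B].

Definition Lambda27 (W : 'M[R]_7) : Prop := exists u : 'rV[R]_7, W = contr u.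

End G2.

From Pilot Require Import Defs.
From HB Require Import structures.
From mathcomp Require Import all_boot all_order all_algebra.
From mathcomp Require Import reals ring zify.
Set Implicit Arguments. Unset Strict Implicit. Unset Printing Implicit Defensive.
Import Order.TTheory GRing.Theory Num.Theory.
Local Open Scope ring_scope.

(* The identity [(a × b) ⌟ φ = a ∧ b − Ψ_ab] puts [(a × b) ⌟ φ] in Θ(P) for
   [a, b ∈ P], and an associative plane satisfies [P = P × P]: for [u ∈ P] pick
   [0 ≠ v ∈ P] orthogonal to u, then [v × (v × u) = −|v|² u].
   Conversely, every form in Θ(P) vanishes on [(x, m)] with [x ∈ P] and [m ⊥ P],
   since [ψ(p, q, x, m) = ⟨p,x⟩⟨q,m⟩ − ⟨p,m⟩⟨q,x⟩ − ⟨(p × q) × x, m⟩] and P is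
   closed under ×.  For [u ⌟ φ], [0 ≠ x ∈ P] and [m = x × n] with [n ⊥ P] this
   reads [0 = φ(u, x, x × n) = −|x|² ⟨n, u⟩]; hence [u ∈ (P^⊥)^⊥ = P]. *)

Section RowDot.
Variables (R : comNzRingType) (n : nat).
Implicit Types (a b c x y : 'rV[R]_n) (M : 'M[R]_n).

Definition dot a b : R := (a *m b^T) 0 0.

Lemma dotE a b : dot a b = \sum_k a 0 k * b 0 k.
Proof. by rewrite /dot mxE; apply: eq_bigr => k _; rewrite mxE. Qed.

Lemma dotC a b : dot a b = dot b a.
Proof. by rewrite !dotE; apply: eq_bigr => k _; rewrite mulrC. Qed.

Lemma dotDl a b c : dot (a + b) c = dot a c + dot b c.
Proof. by rewrite /dot mulmxDl mxE. Qed.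

Lemma dotBl a b c : dot (a - b) c = dot a c - dot b c.
Proof. by rewrite /dot mulmxBl !mxE. Qed.

Lemma dotZl r a b : dot (r *: a) b = r * dot a b.
Proof. by rewrite /dot -scalemxAl mxE. Qed.

Lemma dotDr a b c : dot a (b + c) = dot a b + dot a c.
Proof. by rewrite dotC dotDl !(dotC a). Qed.

Lemma dotZr r a b : dot a (r *: b) = r * dot a b.
Proof. by rewrite dotC dotZl dotC. Qed.

Lemma dot_delta a k : dot a (delta_mx 0 k) = a 0 k.
Proof. by rewrite /dot trmx_delta -colE mxE. Qed.

Lemma dot_tr_col k (A : 'M[R]_(n, k)) a j : dot a (col j A)^T = (a *m A) 0 j.
Proof. by rewrite /dot trmxK colE mulmxA -colE mxE. Qed.

Lemma dot_rowP a b : (forall c, dot a c = dot b c) -> a = b.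
Proof. by move=> eq_ab; apply/rowP => k; rewrite -!dot_delta. Qed.

Lemma linear_row_expand (g : 'rV[R]_n -> R) :
  (forall a b, g (a + b) = g a + g b) -> (forall r a, g (r *: a) = r * g a) ->
  forall x, g x = \sum_k x 0 k * g (delta_mx 0 k).
Proof.
move=> gD gZ x; have g0 : g 0 = 0 by rewrite -(scale0r 0) gZ mul0r.
rewrite {1}(row_sum_delta x) (big_morph g gD g0).
by apply: eq_bigr => k _; rewrite gZ.
Qed.

Definition bform M x y : R := (x *m M *m y^T) 0 0.

Lemma bformD M N x y : bform (M + N) x y = bform M x y + bform N x y.
Proof. by rewrite /bform mulmxDr mulmxDl mxE. Qed.

Lemma bformB M N x y : bform (M - N) x y = bform M x y - bform N x y.
Proof. by rewrite /bform mulmxBr mulmxBl !mxE. Qed.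

Lemma bform_sum m (c : 'I_m -> R) (X : 'I_m -> 'M[R]_n) x y :
  bform (\sum_i c i *: X i) x y = \sum_i c i * bform (X i) x y.
Proof.
rewrite /bform mulmx_sumr mulmx_suml summxE; apply: eq_bigr => i _.
by rewrite -scalemxAr -scalemxAl mxE.
Qed.

Lemma bform_gram (f : 'rV[R]_n -> 'rV[R]_n -> R) :
  (forall a b c, f a (b + c) = f a b + f a c) ->
  (forall r a b, f a (r *: b) = r * f a b) ->
  (forall a b c, f (a + b) c = f a c + f b c) ->
  (forall r a b, f (r *: a) b = r * f a b) ->
  forall x y, bform (\matrix_(i, j) f (delta_mx 0 i) (delta_mx 0 j)) x y = f x y.
Proof.
move=> fDr fZr fDl fZl x y.
rewrite (linear_row_expand (fun a b => fDl a b y) (fun r a => fZl r a y) x).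
rewrite /bform -mulmxA mxE; apply: eq_bigr => i _; congr (_ * _).
rewrite (linear_row_expand (fDr _) (fun r => fZr r _) y) mxE.
by apply: eq_bigr => j _; rewrite !mxE mulrC.
Qed.

End RowDot.

Lemma dot_self_eq0 (R : realDomainType) n (a : 'rV[R]_n) : (dot a a == 0) = (a == 0).
Proof.
apply/idP/eqP => [|->]; last by rewrite /dot mul0mx mxE.
rewrite dotE psumr_eq0 => [/allP sq0|k _]; last by rewrite -expr2 sqr_ge0.
apply/rowP => k; rewrite mxE; apply/eqP.
by rewrite -sqrf_eq0 expr2 (implyP (sq0 k _)) // mem_index_enum.
Qed.

Section Orthogonality.
Variables (R : fieldType) (m n : nat) (P : 'M[R]_(m, n)).

Definition perp (c : 'rV[R]_n) : Prop := forall p, (p <= P)%MS -> dot p c = 0.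

Lemma perp_coker_col j : perp (col j (cokermx P))^T.
Proof. by move=> p /submxP [D ->]; rewrite dot_tr_col -mulmxA mulmx_coker mulmx0 mxE. Qed.

Lemma perp_perp_submx u : (forall c, perp c -> dot u c = 0) -> (u <= P)%MS.
Proof.
move=> perp_u; rewrite submxE; apply/eqP/rowP => j.
by rewrite [RHS]mxE -dot_tr_col; apply/perp_u/perp_coker_col.
Qed.

Lemma exists_nonzero_orth u : (1 < \rank P)%N ->
  exists v, [/\ (v <= P)%MS, v != 0 & dot v u = 0].
Proof.
move=> rkP; set K := kermx u^T.
have rkK : (n.-1 <= \rank K)%N.
  by rewrite mxrank_ker mxrank_tr; have := rank_leq_row u; lia.
have rk_cap : (0 < \rank (P :&: K))%N.
  have := mxrank_sum_cap P K; have := rank_leq_col (P + K)%MS.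
  have := rank_leq_col P; lia.
exists (nz_row (P :&: K)%MS); split.
- exact: submx_trans (nz_row_sub _) (capmxSl _ _).
- by rewrite nz_row_eq0 -mxrank_eq0 -lt0n.
- have /sub_kermxP vu0 : (nz_row (P :&: K)%MS <= K)%MS.
    exact: submx_trans (nz_row_sub _) (capmxSr _ _).
  by rewrite /dot vu0 mxE.
Qed.

End Orthogonality.

Section SmallDeterminants.
Variable R : comNzRingType.

(* Stated for matrices given by nat-indexed entries, so that the minors keep
   that shape. *)
Lemma expand_det_nat_row0 n (g : nat -> nat -> R) :
  \det (\matrix_(i < n.+1, j < n.+1) g i j) =
  \sum_(j < n.+1) (-1) ^+ j * g 0%N j * \det (\matrix_(i < n, k < n) g i.+1 (bump j k)).
Proof.
rewrite (expand_det_row _ 0); apply: eq_bigr => j _.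
rewrite /cofactor mxE add0n mulrCA mulrA; congr (_ * \det _).
by apply/matrixP => i k; rewrite !mxE.
Qed.

Local Notation "A `[ i , j ]" := (A (inord i) (inord j)) (at level 3).

Lemma matrix_inordE n (A : 'M[R]_n.+1) : A = \matrix_(i, j) A`[i, j].
Proof. by apply/matrixP => i j; rewrite mxE !inord_val. Qed.

Lemma det_mx22 (A : 'M[R]_2) : \det A = A`[0, 0] * A`[1, 1] - A`[0, 1] * A`[1, 0].
Proof.
rewrite {1}(matrix_inordE A) (expand_det_nat_row0 _ (fun i j => A (inord i) (inord j))).
by rewrite !big_ord_recl big_ord0 !det_mx11 !mxE /=; ring.
Qed.

Lemma det_mx33 (A : 'M[R]_3) : \det A =
    A`[0, 0] * (A`[1, 1] * A`[2, 2] - A`[1, 2] * A`[2, 1])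
  - A`[0, 1] * (A`[1, 0] * A`[2, 2] - A`[1, 2] * A`[2, 0])
  + A`[0, 2] * (A`[1, 0] * A`[2, 1] - A`[1, 1] * A`[2, 0]).
Proof.
rewrite {1}(matrix_inordE A) (expand_det_nat_row0 _ (fun i j => A (inord i) (inord j))).
by rewrite !big_ord_recl big_ord0 !det_mx22 !mxE /bump !inordK //=; ring.
Qed.

End SmallDeterminants.

Section G2Forms.
Variable R : realType.
Implicit Types (a b c u v w x y : 'rV[R]_7).
Local Notation cd := (@Defs.coord R).

Lemma e3E i j k u v w : e3 i j k u v w =
    cd u i * (cd v j * cd w k - cd v k * cd w j)
  - cd u j * (cd v i * cd w k - cd v k * cd w i)
  + cd u k * (cd v i * cd w j - cd v j * cd w i).
Proof. by rewrite /e3 det_mx33 !mxE !inordK. Qed.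

Lemma e4E i j k l u v w x : e4 i j k l u v w x =
  cd u i * e3 j k l v w x - cd u j * e3 i k l v w x
  + cd u k * e3 i j l v w x - cd u l * e3 i j k v w x.
Proof.
pose g p q := cd (nth 0 [:: u; v; w; x] p) (nth 0%N [:: i; j; k; l] q).
rewrite /e4 /= (expand_det_nat_row0 _ g).
rewrite !big_ord_recl big_ord0 !det_mx33 !mxE /bump !inordK //= /g /= !e3E; ring.
Qed.

Lemma coord_bvec i k : (i < 7)%N -> (k < 7)%N ->
  bvec R (inord k) 0 (inord i) = (i == k)%:R.
Proof.
move=> ilt klt; rewrite mxE eqxx /=.
by rewrite -(inj_eq val_inj) /= !inordK.
Qed.

Ltac cross_coord_tac :=
  by rewrite /Defs.coord mxE /phi !e3E /Defs.coord /= !coord_bvec //=; ring.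

Local Notation minor a b i j := (cd a i * cd b j - cd a j * cd b i).

Lemma cross_coord1 a b :
  cd (cross a b) 1 = minor a b 2 3 + minor a b 4 5 - minor a b 6 7.
Proof. cross_coord_tac. Qed.
Lemma cross_coord2 a b :
  cd (cross a b) 2 = - minor a b 1 3 + minor a b 4 6 + minor a b 5 7.
Proof. cross_coord_tac. Qed.
Lemma cross_coord3 a b :
  cd (cross a b) 3 = minor a b 1 2 + minor a b 4 7 - minor a b 5 6.
Proof. cross_coord_tac. Qed.
Lemma cross_coord4 a b :
  cd (cross a b) 4 = - minor a b 1 5 - minor a b 2 6 - minor a b 3 7.
Proof. cross_coord_tac. Qed.
Lemma cross_coord5 a b :
  cd (cross a b) 5 = minor a b 1 4 - minor a b 2 7 + minor a b 3 6.
Proof. cross_coord_tac. Qed.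
Lemma cross_coord6 a b :
  cd (cross a b) 6 = minor a b 1 7 + minor a b 2 4 - minor a b 3 5.
Proof. cross_coord_tac. Qed.
Lemma cross_coord7 a b :
  cd (cross a b) 7 = - minor a b 1 6 + minor a b 2 5 + minor a b 3 4.
Proof. cross_coord_tac. Qed.

Definition cross_coord :=
  (cross_coord1, cross_coord2, cross_coord3, cross_coord4,
   cross_coord5, cross_coord6, cross_coord7).

Lemma dot_coord a b : dot a b = cd a 1 * cd b 1 + cd a 2 * cd b 2 + cd a 3 * cd b 3
  + cd a 4 * cd b 4 + cd a 5 * cd b 5 + cd a 6 * cd b 6 + cd a 7 * cd b 7.
Proof.
rewrite dotE (eq_bigr (fun k : 'I_7 => a 0 (inord k) * b 0 (inord k))) => [|k _].
  rewrite -(big_mkord xpredT (fun k => a 0 (inord k) * b 0 (inord k))).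
  by do 7 rewrite big_ltn //; rewrite big_geq // addr0 !addrA.
by rewrite inord_val.
Qed.

Ltac expand_coords :=
  rewrite ?dot_coord /phi /psi ?e4E ?e3E ?cross_coord /Defs.coord ?mxE; ring.

Lemma phiDr a b c d : phi a b (c + d) = phi a b c + phi a b d.
Proof. expand_coords. Qed.

Lemma phiZr r a b c : phi a b (r *: c) = r * phi a b c.
Proof. expand_coords. Qed.

Lemma phi_rot a b c : phi a b c = phi b c a.
Proof. expand_coords. Qed.

Lemma phi_anti a b c : phi a b c = - phi a c b.
Proof. expand_coords. Qed.

Lemma phi_cross_self v w c : phi v (cross v w) c = dot v w * dot v c - dot v v * dot w c.
Proof. expand_coords. Qed.

Lemma phi_cross a b x y :
  phi (cross a b) x y = dot a x * dot b y - dot a y * dot b x - psi a b x y.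
Proof. expand_coords. Qed.

Lemma phiDm a b c d : phi a (b + c) d = phi a b d + phi a c d.
Proof. by rewrite phi_anti phiDr opprD -!phi_anti. Qed.

Lemma phiZm r a b c : phi a (r *: b) c = r * phi a b c.
Proof. by rewrite phi_anti phiZr [in RHS]phi_anti mulrN. Qed.

Lemma phiZl r a b c : phi (r *: a) b c = r * phi a b c.
Proof. by rewrite phi_rot phiZr -phi_rot. Qed.

Lemma dot_cross a b c : dot (cross a b) c = phi a b c.
Proof.
rewrite dotE [RHS](linear_row_expand (phiDr a b) (fun r => phiZr r a b)).
by apply: eq_bigr => k _; rewrite mxE mulrC.
Qed.

Lemma cross_cross_self v w : cross v (cross v w) = dot v w *: v - dot v v *: w.
Proof.
apply: dot_rowP => c.
by rewrite dot_cross phi_cross_self dotBl !dotZl.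
Qed.

Lemma contrZ r u : contr (r *: u) = r *: contr u.
Proof. by apply/matrixP => i j; rewrite !mxE phiZl. Qed.

Lemma contr_cross a b : contr (cross a b) = wedge2 a b - PsiF a b.
Proof. by apply/matrixP => i j; rewrite !mxE phi_cross /bvec !dot_delta. Qed.

Lemma bform_contr u x y : bform (contr u) x y = phi u x y.
Proof.
exact: (bform_gram (phiDr u) (fun r => phiZr r u) (phiDm u) (fun r => phiZm r u)).
Qed.

Lemma bform_wedge2 a b x y :
  bform (wedge2 a b) x y = dot a x * dot b y - dot a y * dot b x.
Proof.
pose f p q := dot a p * dot b q - dot a q * dot b p.
have -> : wedge2 a b = \matrix_(i, j) f (delta_mx 0 i) (delta_mx 0 j).
  by apply/matrixP => i j; rewrite !mxE /f !dot_delta.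
by apply: bform_gram => *; rewrite /f ?dotDr ?dotZr; ring.
Qed.

End G2Forms.

Lemma in_span_scale (R : realType) (S : 'M[R]_7 -> Prop) c X : S X -> in_span S (c *: X).
Proof. by move=> SX; exists 1%N, (fun=> c), (fun=> X); split=> //; rewrite big_ord1. Qed.

Section AssociativePlane.
Variables (R : realType) (P : 'M[R]_7).
Hypothesis rkP : \rank P = 3%N.
Hypothesis crossP :
  forall u v, (u <= P)%MS -> (v <= P)%MS -> (cross u v <= P)%MS.

Lemma cross_perp x c : (x <= P)%MS -> perp P c -> perp P (cross x c).
Proof.
move=> xP cP p pP.
by rewrite dotC dot_cross phi_anti -dot_cross cP ?oppr0 ?crossP.
Qed.

Lemma Theta_perp W x c : Theta P W -> (x <= P)%MS -> perp P c -> bform W x c = 0.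
Proof.
move=> [A [B [[k [a [X [SX ->]]]] [l [b [Y [SY ->]]]] ->]]] xP cP.
have wedge0 p q : (p <= P)%MS -> (q <= P)%MS -> bform (wedge2 p q) x c = 0.
  by move=> pP qP; rewrite bform_wedge2 !cP // mulr0 mul0r subrr.
have PsiF0 p q : (p <= P)%MS -> (q <= P)%MS -> bform (PsiF p q) x c = 0.
  move=> pP qP; rewrite -[PsiF p q](subKr (wedge2 p q)) -contr_cross.
  by rewrite bformB wedge0 // bform_contr -dot_cross cP ?crossP // subrr.
rewrite bformD !bform_sum !big1 ?addr0 // => i _.
- by have [p [q [pP qP ->]]] := SY i; rewrite PsiF0 ?mulr0.
- by have [p [q [pP qP ->]]] := SX i; rewrite wedge0 ?mulr0.
Qed.

Lemma Theta_contr_submx u : Theta P (contr u) -> (u <= P)%MS.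
Proof.
move=> thu; set x := nz_row P.
have xP : (x <= P)%MS := nz_row_sub P.
have xx0 : dot x x != 0 by rewrite dot_self_eq0 nz_row_eq0 -mxrank_eq0 rkP.
apply: perp_perp_submx => c cP.
have := Theta_perp thu xP (cross_perp xP cP).
rewrite bform_contr phi_rot -dot_cross cross_cross_self dotBl !dotZl (cP x xP).
rewrite mul0r sub0r.
by move/eqP; rewrite oppr_eq0 mulf_eq0 (negbTE xx0) dotC => /eqP.
Qed.

Lemma Theta_contr u : (u <= P)%MS -> Theta P (contr u).
Proof.
move=> uP; have rk_gt1 : (1 < \rank P)%N by rewrite rkP.
have [v [vP v0 vu0]] := exists_nonzero_orth u rk_gt1.
have vv0 : dot v v != 0 by rewrite dot_self_eq0.
set y := cross v u; set k := - (dot v v)^-1.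
have -> : contr u = k *: contr (cross v y).
  rewrite cross_cross_self vu0 scale0r sub0r -scaleNr contrZ scalerA.
  by rewrite /k mulrNN mulVf // scale1r.
exists (k *: wedge2 v y), ((- k) *: PsiF v y); split.
- by apply: in_span_scale; exists v, y; rewrite crossP.
- by apply: in_span_scale; exists v, y; rewrite crossP.
- by rewrite contr_cross scalerBr -scaleNr.
Qed.

End AssociativePlane.

Theorem lemma4p9 (R : realType) (P : 'M[R]_7) :
  assoc_plane P ->
  forall W : 'M[R]_7,
    (Theta P W /\ Lambda27 W) <-> exists2 u : 'rV[R]_7, (u <= P)%MS & W = contr u.
Proof.
move=> [rkP crossP] W; split.
- case=> thW [u Wu]; subst W; exists u => //.
  exact: Theta_contr_submx rkP crossP _ thW.
- by case=> u uP ->; split; [exact: Theta_contr | exists u].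
Qed.
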